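(* Let $f,f':\mathcal D_n^+\to\mathcal D_n^+$ be stable mappings (indexed by $n$) with fixed points $\Delta,\Delta'\in\mathcal D_n^+$, $\Delta=f(\Delta)$ and $\Delta'=f'(\Delta')$. Assume $\Delta'\sim O(1)$, that $f$ is contracting for the stable semi-metric around $\Delta'$ with parameter $\lambda<1$ (i.e. $d_s(f(\Delta''),f(\Delta'))\le\lambda\,d_s(\Delta'',\Delta')$ for all $\Delta''\in\mathcal D_n^+$), and that $$1-\lambda-\left\|\sqrt{\frac{|f(\Delta')-f'(\Delta')|}{\Delta'}}\right\|\ge O(1).$$ Then there exists a constant $K\le O(1)$ such that $\|\Delta-\Delta'\|\le K\,\|f(\Delta')-f'(\Delta')\|$.
   Context: All objects are indexed by $n$; $a\le O(b)$ means $a_n\le Kb_n$ for some $K$ independent of $n$, $a\ge O(b)$ means $a_n\ge\kappa b_n$ for some $\kappa>0$ independent of $n$. For $\Delta\in\mathcal D_n^+$ (diagonal $n\times n$ matrices with positive diagonal entries), $\Delta\sim O(1)$ means $\|\Delta\|\le O(1)$ and $\|\Delta^{-1}\|\le O(1)$; $\|\cdot\|$ is the spectral norm, operations on diagonal matrices are entrywise. $d_s(\Delta,\Delta')=\max_i\frac{|\Delta_i-\Delta'_i|}{\sqrt{\Delta_i\Delta'_i}}$; $f$ is stable if $d_s(f(\Delta),f(\Delta'))\le d_s(\Delta,\Delta')$ for all $\Delta,\Delta'$. *)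

From HB Require Import structures.
From mathcomp Require Import all_boot all_order all_algebra.
From mathcomp Require Import reals.
Set Implicit Arguments. Unset Strict Implicit. Unset Printing Implicit Defensive.
Import Order.TTheory GRing.Theory Num.Theory.
Local Open Scope ring_scope.

(* A diagonal n x n matrix is represented by its diagonal 'I_n -> R;
   all operations on diagonal matrices are entrywise. *)
Definition diag_pos (R : realType) (n : nat) (d : 'I_n -> R) : Prop :=
  forall i, 0 < d i.

(* Spectral norm of a diagonal matrix = max_i |d_i| (0 for n = 0). *)
Definition dnorm (R : realType) (n : nat) (d : 'I_n -> R) : R :=
  \big[Num.max/0]_(i < n) `|d i|.

Definition ds (R : realType) (n : nat) (d d' : 'I_n -> R) : R :=
  \big[Num.max/0]_(i < n) (`|d i - d' i| / Num.sqrt (d i * d' i)).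

Definition maps_pos (R : realType) (n : nat) (f : ('I_n -> R) -> ('I_n -> R)) : Prop :=
  forall d, diag_pos d -> diag_pos (f d).

Definition stable (R : realType) (n : nat) (f : ('I_n -> R) -> ('I_n -> R)) : Prop :=
  forall d d', diag_pos d -> diag_pos d' -> ds (f d) (f d') <= ds d d'.

From mathcomp Require Import all_boot all_order all_algebra.
From mathcomp Require Import reals.
From mathcomp Require Import ring lra.
Import Order.TTheory GRing.Theory Num.Theory.
Set Implicit Arguments. Unset Strict Implicit. Unset Printing Implicit Defensive.
Local Open Scope ring_scope.

(** Put [a = Delta], [c = Delta'] and [b = f(Delta')]; as [f'(Delta') = Delta'],
    [b - c] is the perturbation [f(Delta') - f'(Delta')]. Since [Delta = f(Delta)], the
    contraction gives [d_s(a, b) <= lambda d_s(a, c)]. Entrywise, [d_s] satisfies the perturbed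
    triangle inequality [d_s(a, c) <= d_s(a, b) max(sqrt(b/c), sqrt(c/b)) + d_s(b, c)], and the
    gap hypothesis makes [lambda max(sqrt(b/c), sqrt(c/b)) <= 1 - kappa]. Hence
    [kappa d_s(a, c) <= d_s(b, c) <= kappa^-1 max_i |b_i - c_i| / c_i], and finally
    [|a_i - c_i| <= x (1 + x) c_i] with [x = d_s(a, c)] turns this into a bound in norm. *)

Section ScalarEstimates.
Variable R : rcfType.
Implicit Types a b c p r u al be ga lam kap x : R.

Definition ds1 a b := `|a - b| / Num.sqrt (a * b).

Lemma ds1_ge0 a b : 0 <= ds1 a b.
Proof. by rewrite divr_ge0 ?sqrtr_ge0. Qed.

(* With [a = al^2] and [c = ga^2], [ds1 a c = |u - u^-1|] for the ratio [u = al / ga]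
   (see [ds1_sqr]); the scalar estimates are proved in this form. *)
Lemma pos_sqr a : 0 < a -> exists2 al, 0 < al & a = al ^+ 2.
Proof. by move=> a_gt0; exists (Num.sqrt a); rewrite ?sqrtr_gt0 ?sqr_sqrtr ?(ltW a_gt0). Qed.

Lemma ds1_sqr al ga : 0 < al -> 0 < ga ->
  ds1 (al ^+ 2) (ga ^+ 2) = `|al / ga - (al / ga)^-1|.
Proof.
move=> al_gt0 ga_gt0; rewrite /ds1 -exprMn sqrtr_sqr -normf_div.
by congr (`|_|); field; rewrite !gt_eqF.
Qed.

Lemma rel_dev_sqr be ga : 0 < ga ->
  `|be ^+ 2 - ga ^+ 2| / ga ^+ 2 = `|(be / ga) ^+ 2 - 1|.
Proof.
move=> ga_gt0; rewrite -[X in _ / X](gtr0_norm (exprn_gt0 2 ga_gt0)) -normf_div.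
by congr (`|_|); field; rewrite gt_eqF.
Qed.

Lemma dist1_le_sqrt r : 0 <= r -> `|r - 1| <= Num.sqrt `|r ^+ 2 - 1|.
Proof.
move=> r_ge0; rewrite -[X in X <= _]sqrtr_sqr ler_wsqrtr //.
have -> : r ^+ 2 - 1 = (r - 1) * (r + 1) by ring.
rewrite normrM -[X in X <= _]real_normK ?num_real // expr2 ler_wpM2l //.
by rewrite (ger0_norm (x := r + 1)) ?ler_norml; lra.
Qed.

Lemma dev_mul p r : 0 < p -> 0 < r ->
  `|p * r - (p * r)^-1| <= `|p - p^-1| * Num.max r r^-1 + `|r - r^-1|.
Proof.
move=> p_gt0 r_gt0; have r_le_max : r <= Num.max r r^-1 by rewrite le_max lexx.
have rV_le_max : r^-1 <= Num.max r r^-1 by rewrite le_max lexx orbT.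
have [p_ge1|p_lt1] := lerP 1 p.
- have -> : p * r - (p * r)^-1 = (p - p^-1) * r + p^-1 * (r - r^-1).
    by field; rewrite !gt_eqF.
  apply: le_trans (ler_normD _ _) _; apply: lerD.
    by rewrite normrM (gtr0_norm r_gt0); apply: ler_wpM2l.
  by rewrite normrM gtr0_norm ?invr_gt0 // ler_piMl // invf_le1.
- have -> : p * r - (p * r)^-1 = (p - p^-1) * r^-1 + p * (r - r^-1).
    by field; rewrite !gt_eqF.
  apply: le_trans (ler_normD _ _) _; apply: lerD.
    by rewrite normrM [`|r^-1|]gtr0_norm ?invr_gt0 //; apply: ler_wpM2l.
  by rewrite normrM gtr0_norm // ler_piMl // (ltW p_lt1).
Qed.

Lemma contract_factor lam kap r : 0 < r -> 0 <= lam -> 0 <= kap ->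
  lam + Num.sqrt `|r ^+ 2 - 1| + kap <= 1 -> lam * Num.max r r^-1 <= 1 - kap.
Proof.
move=> r_gt0 lam_ge0 kap_ge0; have := dist1_le_sqrt (ltW r_gt0).
have := sqrtr_ge0 `|r ^+ 2 - 1|; set t := Num.sqrt _ => t_ge0.
rewrite ler_norml => /andP[r_ge r_le] gap.
rewrite maxr_pMr // ge_max; apply/andP; split; first by nra.
by rewrite -ler_pdivlMr ?invr_gt0 // invrK; nra.
Qed.

Lemma dev_le_rel_dev kap r : 0 < r -> 0 <= kap -> Num.sqrt `|r ^+ 2 - 1| + kap <= 1 ->
  kap * `|r - r^-1| <= `|r ^+ 2 - 1|.
Proof.
move=> r_gt0 kap_ge0; have := dist1_le_sqrt (ltW r_gt0).
have := sqrtr_ge0 `|r ^+ 2 - 1|; set t := Num.sqrt _ => t_ge0.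
rewrite ler_norml => /andP[r_ge _] gap.
have -> : r - r^-1 = (r ^+ 2 - 1) / r by field; rewrite gt_eqF.
rewrite normrM [`|r^-1|]gtr0_norm ?invr_gt0 // mulrCA ler_piMr //.
by rewrite ler_pdivrMr // mul1r; lra.
Qed.

Lemma dist_le_dev u : 0 < u -> u - 1 <= `|u - u^-1|.
Proof.
move=> u_gt0; have [u_ge1|u_lt1] := lerP 1 u; last by apply: le_trans (normr_ge0 _); lra.
by rewrite ger0_norm ?lerD2l ?lerN2 ?invf_le1 // subr_ge0 (le_trans _ u_ge1) ?invf_le1.
Qed.

Lemma ds1_triangle_contract a b c lam kap x :
  0 < a -> 0 < b -> 0 < c -> 0 <= lam -> 0 <= kap -> 0 <= x ->
  lam + Num.sqrt (`|b - c| / c) + kap <= 1 ->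
  ds1 a b <= lam * x -> ds1 a c <= (1 - kap) * x + ds1 b c.
Proof.
move=> /pos_sqr[al al_gt0 ->] /pos_sqr[be be_gt0 ->] /pos_sqr[ga ga_gt0 ->].
move=> lam_ge0 kap_ge0 x_ge0; rewrite rel_dev_sqr // !ds1_sqr // => gap dev_ab.
have bega_gt0 : 0 < be / ga by rewrite divr_gt0.
have factor := contract_factor bega_gt0 lam_ge0 kap_ge0 gap.
have -> : al / ga = al / be * (be / ga) by field; rewrite !gt_eqF.
apply: le_trans (dev_mul (divr_gt0 al_gt0 be_gt0) bega_gt0) _; rewrite lerD2r.
apply: le_trans (ler_wpM2r _ dev_ab) _; first by rewrite le_max (ltW bega_gt0).
by rewrite mulrAC; apply: ler_wpM2r.
Qed.

Lemma ds1_le_rel_dev b c kap : 0 < b -> 0 < c -> 0 <= kap ->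
  Num.sqrt (`|b - c| / c) + kap <= 1 -> kap * ds1 b c <= `|b - c| / c.
Proof.
move=> /pos_sqr[be be_gt0 ->] /pos_sqr[ga ga_gt0 ->] kap_ge0.
by rewrite rel_dev_sqr // ds1_sqr //; apply: dev_le_rel_dev; rewrite ?divr_gt0.
Qed.

Lemma dist_le_ds1 a c : 0 < a -> 0 < c -> `|a - c| <= ds1 a c * (1 + ds1 a c) * c.
Proof.
move=> /pos_sqr[al al_gt0 ->] /pos_sqr[ga ga_gt0 ->]; rewrite ds1_sqr //.
have u_gt0 : 0 < al / ga by rewrite divr_gt0.
have -> : al ^+ 2 - ga ^+ 2 = (al / ga - (al / ga)^-1) * (al / ga) * ga ^+ 2.
  by field; rewrite !gt_eqF.
rewrite 2!normrM normrX (gtr0_norm u_gt0) (gtr0_norm ga_gt0).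
apply: ler_wpM2r; first exact/exprn_ge0/ltW.
by apply: ler_wpM2l => //; rewrite -lerBlDl dist_le_dev.
Qed.

End ScalarEstimates.

Section DiagonalBounds.
Variables (R : realType) (n : nat).
Implicit Types d e : 'I_n -> R.

Lemma ds1_le_ds d e i : ds1 (d i) (e i) <= ds d e.
Proof. exact: (le_bigmax 0 (fun j => ds1 (d j) (e j))). Qed.

Lemma ds_ge0 d e : 0 <= ds d e.
Proof. exact: bigmax_ge_id. Qed.

Lemma ds_le d e B : 0 <= B -> (forall i, ds1 (d i) (e i) <= B) -> ds d e <= B.
Proof. by move=> B_ge0 le_B; apply: bigmax_le => // i _; apply: le_B. Qed.

Lemma norm_le_dnorm d i : `|d i| <= dnorm d.
Proof. exact: (le_bigmax 0 (fun j => `|d j|)). Qed.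

Lemma dnorm_ge0 d : 0 <= dnorm d.
Proof. exact: bigmax_ge_id. Qed.

Lemma dnorm_le d B : 0 <= B -> (forall i, `|d i| <= B) -> dnorm d <= B.
Proof. by move=> B_ge0 le_B; apply: bigmax_le => // i _; apply: le_B. Qed.

Lemma dnorm_sub_le_ds d e : diag_pos d -> diag_pos e ->
  dnorm (fun i => d i - e i) <= ds d e * (1 + ds d e) * dnorm e.
Proof.
move=> d_pos e_pos; have x_ge0 := ds_ge0 d e.
apply: dnorm_le => [|i]; first by rewrite !mulr_ge0 ?addr_ge0 ?dnorm_ge0 ?ler01.
apply: le_trans (dist_le_ds1 (d_pos i) (e_pos i)) _.
have ds1_le := ds1_le_ds d e i; have ds1_ge0 := ds1_ge0 (d i) (e i).
have ds1D_ge0 : 0 <= 1 + ds1 (d i) (e i) by rewrite addr_ge0 ?ler01.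
apply: ler_pM (mulr_ge0 ds1_ge0 ds1D_ge0) (ltW (e_pos i)) _ _.
  by apply: ler_pM ds1_ge0 ds1D_ge0 ds1_le _; rewrite lerD2l ds1_le_ds.
by rewrite -[X in X <= _]gtr0_norm ?e_pos ?norm_le_dnorm.
Qed.

End DiagonalBounds.

Section FixedPointPerturbation.
Variables (R : realType) (n : nat) (a b c : 'I_n -> R) (lam kap : R).
Hypotheses (a_pos : diag_pos a) (b_pos : diag_pos b) (c_pos : diag_pos c).
Hypothesis kap_gt0 : 0 < kap.
Hypothesis contract : ds a b <= lam * ds a c.
Hypothesis gap : kap <= 1 - lam - dnorm (fun i => Num.sqrt (`|b i - c i| / c i)).

Lemma gap_at i : lam + Num.sqrt (`|b i - c i| / c i) + kap <= 1.
Proof.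
have := norm_le_dnorm (fun i => Num.sqrt (`|b i - c i| / c i)) i.
by rewrite /= ger0_norm ?sqrtr_ge0 //; have := gap; lra.
Qed.

Lemma ds_le0_of_lt0 : lam < 0 -> ds a c <= 0.
Proof. by move=> lam_lt0; rewrite -(nmulr_rge0 _ lam_lt0) (le_trans (ds_ge0 a b)). Qed.

Lemma kap_ds_ac_le (lam_ge0 : 0 <= lam) : kap * ds a c <= ds b c.
Proof.
have x_ge0 := ds_ge0 a c; have y_ge0 := ds_ge0 b c.
have kap_le1 : kap <= 1.
  by have := dnorm_ge0 (fun i => Num.sqrt (`|b i - c i| / c i)); have := gap; lra.
suff : ds a c <= (1 - kap) * ds a c + ds b c by lra.
apply: ds_le => [|i]; first by rewrite addr_ge0 ?mulr_ge0 ?subr_ge0.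
apply: le_trans (ds1_triangle_contract (a_pos i) (b_pos i) (c_pos i) lam_ge0
  (ltW kap_gt0) x_ge0 (gap_at i) (le_trans (ds1_le_ds a b i) contract)) _.
by rewrite lerD2l ds1_le_ds.
Qed.

Lemma kap_ds_bc_le (lam_ge0 : 0 <= lam) B : 0 <= B ->
  (forall i, `|b i - c i| / c i <= B) -> kap * ds b c <= B.
Proof.
move=> B_ge0 rel_dev_le; rewrite mulrC -ler_pdivlMr //.
apply: ds_le => [|i]; first exact: divr_ge0 B_ge0 (ltW kap_gt0).
rewrite ler_pdivlMr // mulrC; apply: le_trans (rel_dev_le i).
by apply: ds1_le_rel_dev (b_pos i) (c_pos i) (ltW kap_gt0) _; have := gap_at i; lra.
Qed.

Lemma rel_dev_le1 (lam_ge0 : 0 <= lam) i : `|b i - c i| / c i <= 1.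
Proof.
rewrite -[_ / _]sqr_sqrtr ?divr_ge0 ?(ltW (c_pos i)) // exprn_ile1 ?sqrtr_ge0 //.
by have := gap_at i; have := kap_gt0; lra.
Qed.

Lemma rel_dev_le_dnorm i :
  `|b i - c i| / c i <= dnorm (fun i => b i - c i) * dnorm (fun i => (c i)^-1).
Proof.
have cVi_ge0 : 0 <= (c i)^-1 by rewrite invr_ge0 ltW.
apply: ler_pM => //; first exact: (norm_le_dnorm (fun i => b i - c i) i).
by rewrite -[X in X <= _]ger0_norm //; apply: (norm_le_dnorm (fun i => (c i)^-1) i).
Qed.

Lemma ds_fixed_le : ds a c <=
  kap^-2 * Num.min (dnorm (fun i => b i - c i) * dnorm (fun i => (c i)^-1)) 1.
Proof.
have M_ge0 : 0 <= Num.min (dnorm (fun i => b i - c i) * dnorm (fun i => (c i)^-1)) 1.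
  by rewrite le_min mulr_ge0 ?dnorm_ge0 ?ler01.
have [lam_lt0|lam_ge0] := ltP lam 0.
  by apply: le_trans (ds_le0_of_lt0 lam_lt0) _; rewrite mulr_ge0 ?invr_ge0 ?exprn_ge0 // ltW.
rewrite ler_pdivlMl ?exprn_gt0 // expr2 -mulrA.
apply: le_trans (ler_wpM2l (ltW kap_gt0) (kap_ds_ac_le lam_ge0)) _.
apply: kap_ds_bc_le => // i.
by rewrite le_min rel_dev_le_dnorm rel_dev_le1.
Qed.

Lemma dnorm_fixed_le :
  dnorm (fun i => a i - c i) <= (1 + kap^-2) * kap^-2 * dnorm c
    * dnorm (fun i => (c i)^-1) * dnorm (fun i => b i - c i).
Proof.
have kk_ge0 : 0 <= kap^-2 by rewrite invr_ge0 exprn_ge0 // ltW.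
have [x_le_E x_le1] : ds a c <= kap^-2 * (dnorm (fun i => b i - c i) * dnorm (fun i => (c i)^-1))
                   /\ ds a c <= kap^-2.
  split; apply: (le_trans ds_fixed_le); last rewrite -[X in _ <= X]mulr1;
    by apply: ler_wpM2l => //; rewrite ge_min lexx ?orbT.
apply: le_trans (dnorm_sub_le_ds a_pos c_pos) _.
have x_ge0 := ds_ge0 a c.
have : ds a c * (1 + ds a c) <= kap^-2 * (dnorm (fun i => b i - c i)
    * dnorm (fun i => (c i)^-1)) * (1 + kap^-2).
  by apply: ler_pM => //; rewrite ?addr_ge0 ?ler01 // lerD2l.
move/(ler_wpM2r (dnorm_ge0 c))/le_trans; apply.
by rewrite le_eqVlt; apply/orP; left; apply/eqP; ring.
Qed.

End FixedPointPerturbation.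

Theorem theorem6 (R : realType)
  (f f' : forall n : nat, ('I_n -> R) -> ('I_n -> R))
  (D D' : forall n : nat, 'I_n -> R) (lambda : nat -> R) :
  (forall n, maps_pos (f n) /\ maps_pos (f' n)) ->
  (forall n, stable (f n) /\ stable (f' n)) ->
  (forall n, diag_pos (D n) /\ diag_pos (D' n)) ->
  (forall n, D n = f n (D n)) ->
  (forall n, D' n = f' n (D' n)) ->
  (* Delta' ~ O(1) *)
  (exists K : R, forall n,
      dnorm (D' n) <= K /\ dnorm (fun i => (D' n i)^-1) <= K) ->
  (* f contracting around Delta' with parameter lambda < 1 *)
  (forall n, lambda n < 1) ->
  (forall n (D'' : 'I_n -> R), diag_pos D'' ->
      ds (f n D'') (f n (D' n)) <= lambda n * ds D'' (D' n)) ->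
  (* 1 - lambda - || sqrt(|f(D') - f'(D')| / D') || >= O(1) *)
  (exists kappa : R, 0 < kappa /\ forall n,
      kappa <= 1 - lambda n
               - dnorm (fun i => Num.sqrt (`|f n (D' n) i - f' n (D' n) i| / D' n i))) ->
  exists K : R, forall n,
    dnorm (fun i => D n i - D' n i) <= K * dnorm (fun i => f n (D' n) i - f' n (D' n) i).
Proof.
move=> maps _ pos fixD fixD' [K bounded] _ contract [kap [kap_gt0 gap]].
exists ((1 + kap^-2) * kap^-2 * K * K) => n.
have [Dn_pos D'n_pos] := pos n; have [D'_le V_le] := bounded n.
have fD'_pos : diag_pos (f n (D' n)) by apply: (maps n).1.
have contract_n : ds (D n) (f n (D' n)) <= lambda n * ds (D n) (D' n).
  by rewrite {1}(fixD n); apply: contract.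
have gap_n := gap n; rewrite -(fixD' n) in gap_n *.
apply: le_trans (dnorm_fixed_le Dn_pos fD'_pos D'n_pos kap_gt0 contract_n gap_n) _.
apply: ler_wpM2r; first exact: dnorm_ge0.
have kk_ge0 : 0 <= (1 + kap^-2) * kap^-2.
  by rewrite mulr_ge0 ?addr_ge0 ?invr_ge0 ?exprn_ge0 ?ler01 // ltW.
apply: ler_pM => //; first by rewrite mulr_ge0 ?dnorm_ge0.
  exact: dnorm_ge0.
by apply: ler_wpM2l.
Qed.
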